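(* Let $\mu_0$ and $\mu_1$ be probabilistic frames on $\mathbb{R}^d$ that are absolutely continuous with respect to Lebesgue measure, and suppose there is a linear map $r(x)=Ax$, with $A\in\mathbb{R}^{d\times d}$ positive semi-definite, such that $r_\#\mu_0=\mu_1$ and $r$ minimizes the 2-Wasserstein transport cost, i.e. $\int\|x-r(x)\|^2d\mu_0(x)=W_2^2(\mu_0,\mu_1)$. Then every measure $\mu_t=(h_t)_\#\mu_0$, $h_t(x)=(1-t)x+tr(x)$, $t\in[0,1]$, on the geodesic between $\mu_0$ and $\mu_1$ has support which spans $\mathbb{R}^d$, and is therefore a probabilistic frame.
   Context: A probabilistic frame is a probability measure on $\mathbb{R}^d$ with finite second moment whose support spans $\mathbb{R}^d$. $W_2^2(\mu_0,\mu_1)=\inf_\gamma\iint\|x-y\|^2d\gamma(x,y)$ over couplings $\gamma$ of $\mu_0,\mu_1$. $T_\#\mu$ denotes the pushforward of $\mu$ by $T$. *)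

From HB Require Import structures.
From mathcomp Require Import all_boot all_order all_algebra.
From mathcomp Require Import all_classical all_reals all_analysis.
Set Implicit Arguments. Unset Strict Implicit. Unset Printing Implicit Defensive.
Import Order.TTheory GRing.Theory Num.Theory.
Import numFieldNormedType.Exports.
Local Open Scope classical_set_scope.
Local Open Scope ring_scope.

Section Defs.
Context (R : realType) (d : nat).

Definition enorm2 (x : 'rV[R]_d) : R := \sum_(i < d) (x 0 i) ^+ 2.

Definition eball (x : 'rV[R]_d) (e : R) : set 'rV[R]_d :=
  [set y | enorm2 (y - x) < e ^+ 2].

Definition eopen (U : set 'rV[R]_d) : Prop :=
  forall x, U x -> exists2 e : R, 0 < e & eball x e `<=` U.

Definition borel_sets : set (set 'rV[R]_d) := eopen.

End Defs.

Notation Rd R d := (g_sigma_algebraType (@borel_sets R d)).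

Section Defs2.
Context (R : realType) (d : nat).
Local Notation E := (Rd R d).

(* Lebesgue null sets: coverable by countably many open boxes of
   arbitrarily small total volume (Lebesgue outer measure zero). *)
Definition box (a b : 'rV[R]_d) : set 'rV[R]_d :=
  [set x | forall i, a 0 i < x 0 i < b 0 i].

Definition box_vol (a b : 'rV[R]_d) : R := \prod_(i < d) (b 0 i - a 0 i).

Definition lebesgue_null (N : set 'rV[R]_d) : Prop :=
  forall eps : R, 0 < eps -> exists (a b : nat -> 'rV[R]_d),
    (forall n i, a n 0 i < b n 0 i) /\
    N `<=` \bigcup_n box (a n) (b n) /\
    (\sum_(0 <= n <oo) (box_vol (a n) (b n))%:E < eps%:E)%E.

Definition abs_cont_leb (mu : set E -> \bar R) : Prop :=
  forall A : set E, measurable A -> lebesgue_null A -> mu A = 0%E.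

Definition msupport (mu : set E -> \bar R) : set 'rV[R]_d :=
  [set x | forall e : R, 0 < e -> (0 < mu (eball x e))%E].

Definition lin_span (S : set 'rV[R]_d) : set 'rV[R]_d :=
  [set v | exists n (c : 'I_n -> R) (x : 'I_n -> 'rV[R]_d),
     (forall j, S (x j)) /\ v = \sum_(j < n) c j *: x j].

Definition spans_Rd (S : set 'rV[R]_d) : Prop := lin_span S = setT.

Definition finite_second_moment (mu : set E -> \bar R) : Prop :=
  (\int[mu]_x (enorm2 x)%:E < +oo)%E.

Definition frame_conditions (mu : set E -> \bar R) : Prop :=
  finite_second_moment mu /\ spans_Rd (msupport mu).

Definition prob_frame (mu : probability E R) : Prop := frame_conditions mu.

Definition coupling (mu0 mu1 : probability E R)
    (g : probability (E * E)%type R) : Prop :=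
  (forall B : set E, measurable B -> g (fst @^-1` B) = mu0 B) /\
  (forall B : set E, measurable B -> g (snd @^-1` B) = mu1 B).

Definition W2sq (mu0 mu1 : probability E R) : \bar R :=
  ereal_inf [set (\int[g]_z (enorm2 (z.1 - z.2))%:E)%E
            | g in [set g | coupling mu0 mu1 g]].

Definition psd (A : 'M[R]_d) : Prop :=
  A^T = A /\ forall x : 'rV[R]_d, 0 <= (x *m A *m x^T) 0 0.

(* The linear map x |-> A x, written on row vectors. *)
Definition linmap (A : 'M[R]_d) (x : E) : E := x *m A^T.

Definition interp (A : 'M[R]_d) (t : R) (x : E) : E :=
  (1 - t) *: x + t *: linmap A x.

End Defs2.

From HB Require Import structures.
From mathcomp Require Import all_boot all_order all_algebra.
From mathcomp Require Import all_classical all_reals all_analysis.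
From mathcomp Require Import lra measurable_realfun.
Set Implicit Arguments. Unset Strict Implicit. Unset Printing Implicit Defensive.
Import Order.TTheory GRing.Theory Num.Theory.
Import numFieldNormedType.Exports.
Local Open Scope classical_set_scope.
Local Open Scope ring_scope.

(** The interpolation map h_t is linear, with matrix (1 - t) I + t A^T.
   For t < 1 this matrix is positive definite (a positive multiple of the
   identity plus a positive semi-definite matrix), hence invertible, and an
   invertible linear map sends the support of mu0 into the support of its
   pushforward, so a spanning support stays spanning.  For t = 1 the
   pushforward is mu1 itself, a frame by hypothesis.  Finiteness of the second
   moment holds for every linear image, since |x M|^2 <= K |x|^2. *)

Section LinearImages.
Context {R : realType} {d : nat}.
Local Notation E := (Rd R d).

Lemma sqr_sum_mul_le (a b : 'I_d -> R) :
  (\sum_i a i * b i) ^+ 2 <= (\sum_i a i ^+ 2) * (\sum_i b i ^+ 2).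
Proof.
have -> : (\sum_i a i * b i) ^+ 2 = \sum_i \sum_k (a i * b i * (a k * b k)).
  by rewrite expr2 mulr_suml; apply: eq_bigr => i _; rewrite mulr_sumr.
have -> : (\sum_i a i ^+ 2) * (\sum_i b i ^+ 2) = \sum_i \sum_k (a i ^+ 2 * b k ^+ 2).
  by rewrite mulr_suml; apply: eq_bigr => i _; rewrite mulr_sumr.
rewrite -(ler_pM2l (_ : 0 < 2%:R)) // mulr2n !mulrDl !mul1r.
rewrite [X in _ <= X + _]exchange_big -!big_split /=.
apply: ler_sum => i _; rewrite -!big_split /=; apply: ler_sum => k _.
have := sqr_ge0 (a i * b k - a k * b i); nra.
Qed.

Lemma enorm2_ge0 (v : 'rV[R]_d) : 0 <= enorm2 v.
Proof. by apply: sumr_ge0 => j _; exact: sqr_ge0. Qed.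

Lemma enorm2_eq0 (v : 'rV[R]_d) : enorm2 v = 0 -> v = 0.
Proof.
move=> /eqP; rewrite psumr_eq0 => [/allP v0|j _]; last exact: sqr_ge0.
by apply/rowP => j; rewrite mxE; apply/eqP; rewrite -sqrf_eq0 (eqP (v0 j _)).
Qed.

Lemma sqr_coord_le_enorm2 (v : 'rV[R]_d) i : v 0 i ^+ 2 <= enorm2 v.
Proof.
by rewrite /enorm2 (bigD1 i) //= lerDl; apply: sumr_ge0 => j _; exact: sqr_ge0.
Qed.

Lemma enorm2E (v : 'rV[R]_d) : enorm2 v = (v *m v^T) 0 0.
Proof. by rewrite /enorm2 !mxE; apply: eq_bigr => j _; rewrite !mxE expr2. Qed.

Lemma enorm2_mulmx_le (M : 'M[R]_d) : exists2 K : R, 0 <= K &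
  forall v : 'rV[R]_d, enorm2 (v *m M) <= K * enorm2 v.
Proof.
exists (\sum_j \sum_i M i j ^+ 2).
  by apply: sumr_ge0 => j _; apply: sumr_ge0 => i _; exact: sqr_ge0.
move=> v; rewrite /enorm2 mulr_suml; apply: ler_sum => j _.
by rewrite mxE mulrC; exact: (sqr_sum_mul_le (fun i => v 0 i) (M ^~ j)).
Qed.

Lemma mulmx_eball_sub (M : 'M[R]_d) (x : 'rV[R]_d) (e : R) : 0 < e ->
  exists2 e' : R, 0 < e' &
    eball x e' `<=` (fun y => y *m M) @^-1` eball (x *m M) e.
Proof.
move=> e0; have [K K0 MK] := enorm2_mulmx_le M.
have K1 : 0 < K + 1 by rewrite ltr_wpDl.
exists (e / (K + 1)); first by rewrite divr_gt0.
move=> y; rewrite /eball /= -mulmxBl expr_div_n ltr_pdivlMr ?exprn_gt0 // => yx.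
apply: le_lt_trans (MK _) _.
have := enorm2_ge0 (y - x); nra.
Qed.

Lemma coord_measurable i : measurable_fun setT (fun x : E => x 0 i).
Proof.
apply: (measurability _ (RGenOInfty.measurableE R)) => //.
move=> _ [_ [c ->] <-]; rewrite setTI; apply: sub_sigma_algebra.
move=> y /=; rewrite in_itv /= andbT => cy.
exists (y 0 i - c); first by rewrite subr_gt0.
move=> z /= zy; rewrite in_itv /= andbT.
have := le_lt_trans (sqr_coord_le_enorm2 (z - y) i) zy; rewrite !mxE; nra.
Qed.

Lemma enorm2B_measurable (x : E) :
  measurable_fun setT (fun y : E => enorm2 (y - x)).
Proof.
rewrite /enorm2; under eq_fun do under eq_bigr do rewrite !mxE.
apply: measurable_sum => i; apply: measurable_funX.
by apply: measurable_funB; [exact: coord_measurable | exact: measurable_cst].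
Qed.

Lemma enorm2_measurable : measurable_fun setT (@enorm2 R d : E -> R).
Proof. by have := enorm2B_measurable 0; under eq_fun do rewrite subr0. Qed.

Lemma eball_measurable (x : E) (e : R) : measurable (eball x e : set E).
Proof.
have -> : (eball x e : set E) =
    setT `&` (fun y : E => enorm2 (y - x)) @^-1` `]-oo, e ^+ 2[.
  by apply/seteqP; split => y /=; rewrite ?in_itv /=; [move=> h; split|case].
by apply: enorm2B_measurable => //; exact: measurable_itv.
Qed.

Lemma mulmx_measurable (M : 'M[R]_d) :
  measurable_fun setT (fun x : E => x *m M : E).
Proof.
apply: (measurability _ (erefl (@measurable _ E))) => //.
move=> _ [B oB <-]; rewrite setTI; apply: sub_sigma_algebra => x /= Bx.
have [e e0 eB] := oB _ Bx; have [e' e'0 sub] := mulmx_eball_sub M x e0.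
by exists e' => // y /sub/eB.
Qed.

Lemma finite_second_moment_mulmx (mu : probability E R) (M : 'M[R]_d) :
  finite_second_moment mu ->
  finite_second_moment (pushforward mu (fun x : E => x *m M : E)).
Proof.
rewrite /finite_second_moment => mu_fin.
have [K K0 MK] := enorm2_mulmx_le M.
have norm_ge0 (x : E) : (0 <= (enorm2 x)%:E)%E by rewrite lee_fin enorm2_ge0.
have norm_mE : measurable_fun setT (fun x : E => (enorm2 x)%:E).
  exact: measurableT_comp enorm2_measurable.
rewrite ge0_integral_pushforward //; last exact: mulmx_measurable.
rewrite preimage_setT.
apply: (@le_lt_trans _ _ (\int[mu]_x (K%:E * (enorm2 x)%:E))%E).
  apply: ge0_le_integral => //.
  - by move=> x _; exact: norm_ge0.
  - exact: measurableT_comp norm_mE (mulmx_measurable M).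
  - by apply: emeasurable_funM => //; exact: measurable_cst.
  - by move=> x _ /=; rewrite -EFinM lee_fin.
rewrite ge0_integralZl_EFin //.
have : (\int[mu]_x (enorm2 x)%:E)%E \is a fin_num.
  by rewrite ge0_fin_numE // integral_ge0.
by move=> /fineK <-; rewrite -EFinM ltry.
Qed.

Lemma msupport_mulmx (mu : probability E R) (M : 'M[R]_d) (x : E) :
  msupport mu x -> msupport (pushforward mu (fun x : E => x *m M : E)) (x *m M).
Proof.
move=> supp_x e e0; have [e' e'0 sub] := mulmx_eball_sub M x e0.
apply: lt_le_trans (supp_x _ e'0) _; apply: le_measure => //; rewrite inE.
- exact: eball_measurable.
- by rewrite -[X in measurable X]setTI; apply: mulmx_measurable => //;
    exact: eball_measurable.
Qed.

Lemma spans_msupport_mulmx (mu : probability E R) (M : 'M[R]_d) :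
  M \in unitmx -> spans_Rd (msupport mu) ->
  spans_Rd (msupport (pushforward mu (fun x : E => x *m M : E))).
Proof.
move=> Munit span_mu; apply/seteqP; split => // v _.
have : lin_span (msupport mu) (v *m invmx M) by rewrite span_mu.
case=> n [c [x [supp_x vE]]]; exists n, c, (fun j => x j *m M); split.
  by move=> j; exact: msupport_mulmx.
rewrite -[LHS](mulmxKV Munit v) vE mulmx_suml.
by apply: eq_bigr => j _; rewrite scalemxAl.
Qed.

Lemma msupport_eq (mu nu : set E -> \bar R) :
  (forall B, measurable B -> mu B = nu B) -> msupport mu = msupport nu.
Proof.
move=> munu; apply/seteqP; split => x supp_x e e0.
- by rewrite -munu; [exact: supp_x | exact: eball_measurable].
- by rewrite munu; [exact: supp_x | exact: eball_measurable].
Qed.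

Lemma psd_add_scalar_unitmx (A : 'M[R]_d) (a b : R) :
  psd A -> 0 < a -> 0 <= b -> (a%:M + b *: A) \in unitmx.
Proof.
move=> [_ A_ge0] a0 b0; rewrite -row_free_unit; apply: inj_row_free => v v0.
have quadE : (v *m (a%:M + b *: A) *m v^T) 0 0 =
    a * enorm2 v + b * (v *m A *m v^T) 0 0.
  by rewrite enorm2E mulmxDr mul_mx_scalar -scalemxAr mulmxDl -!scalemxAl !mxE.
rewrite v0 mul0mx mxE in quadE.
apply: enorm2_eq0; have := A_ge0 v; have := enorm2_ge0 v; nra.
Qed.

Lemma interpE (A : 'M[R]_d) (t : R) :
  interp A t = (fun x : E => x *m ((1 - t)%:M + t *: A^T) : E).
Proof.
by apply: funext => x; rewrite /interp /linmap mulmxDr mul_mx_scalar -scalemxAr.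
Qed.

End LinearImages.

Theorem mainTheorem11 (R : realType) (d : nat)
  (mu0 mu1 : probability (Rd R d) R) (A : 'M[R]_d) :
  prob_frame mu0 -> prob_frame mu1 ->
  abs_cont_leb mu0 -> abs_cont_leb mu1 ->
  psd A ->
  (forall B : set (Rd R d), measurable B ->
     mu1 B = mu0 (linmap A @^-1` B)) ->
  (\int[mu0]_x (enorm2 (x - linmap A x))%:E = W2sq mu0 mu1)%E ->
  forall t : R, 0 <= t <= 1 ->
    spans_Rd (msupport (pushforward mu0 (interp A t))) /\
    frame_conditions (pushforward mu0 (interp A t)).
Proof.
move=> [mom0 span0] [_ span1] _ _ A_psd push1 _ t /andP[t0 t1].
have span_t : spans_Rd (msupport (pushforward mu0 (interp A t))).
  move: t1; rewrite le_eqVlt => /orP[/eqP->|t_lt1].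
    have -> : interp A 1 = linmap A.
      by apply: funext => x; rewrite /interp subrr scale0r add0r scale1r.
    by rewrite -(msupport_eq push1).
  have [AtA _] := A_psd.
  rewrite interpE AtA; apply: spans_msupport_mulmx span0.
  by apply: psd_add_scalar_unitmx; rewrite ?subr_gt0.
split=> //; split=> //.
by rewrite interpE; exact: finite_second_moment_mulmx.
Qed.
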